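(* Let $S=(P,L)$ be a slim dense near hexagon, let $Q_1,Q_2$ be two disjoint big quads of $S$, and let $Y$ be the subspace of $S$ generated by $Q_1\cup Q_2$. For $\{i,j\}=\{1,2\}$ and $x\in P\setminus Y$, let $x^{j}$ denote the unique point of $Q_j$ at distance $1$ from $x$, and for $y\in Q_i$ let $z_y$ denote the unique point of $Q_j$ at distance $1$ from $y$. Let $\ell$ be a line of $S$ disjoint from $Y$ and let $x,y\in\ell$ with $x\neq y$. Then the line $x^{1}y^{1}$ equals the line $x^{1}z_{x^{2}}$ if and only if the line $x^{2}y^{2}$ equals the line $x^{2}z_{x^{1}}$. Moreover, if $x^{1}y^{1}=x^{1}z_{x^{2}}$, then $(y^{1},y^{2})=(z_{x^{2}},\,x^{2}\ast z_{x^{1}})$ or $(y^1,y^2)=(x^{1}\ast z_{x^{2}},\,z_{x^{1}})$.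
   Context: A slim partial linear space has exactly $3$ points per line; for distinct collinear points $u,v$, $uv$ denotes the line through them and $u\ast v$ the third point of that line. $d$ is the distance in the collinearity graph. A near hexagon is a connected partial linear space of diameter $3$ with no point collinear with all others such that every point has a unique nearest point on every line. A quad is a convex subset of diameter $2$ in which no point is collinear with all others; the near hexagon is dense if any two points at distance $2$ lie in a quad. A quad $Q$ is big if every point of $S$ has distance at most $1$ from $Q$. A subspace is a set of points containing every line meeting it in at least two points; the subspace generated by a set is the intersection of all subspaces containing it. *)

From Stdlib Require Import Arith.
Set Implicit Arguments.

Section Geometry.
Variable P : Type.
Variable L : (P -> Prop) -> Prop.

Definition slim_pls : Prop :=
  (forall l, L l -> exists a b c, a <> b /\ a <> c /\ b <> c /\
       forall p, l p <-> (p = a \/ p = b \/ p = c)) /\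
  (forall l m u v, L l -> L m -> u <> v -> l u -> l v -> m u -> m v ->
       forall p, l p <-> m p).

Definition collinear (u v : P) : Prop :=
  u <> v /\ exists l, L l /\ l u /\ l v.

Inductive walk : nat -> P -> P -> Prop :=
  | walk0 x : walk 0 x x
  | walkS n x y z : collinear x y -> walk n y z -> walk (S n) x z.

Definition dist (x y : P) (n : nat) : Prop :=
  walk n x y /\ forall m, m < n -> ~ walk m x y.

Definition near_hexagon : Prop :=
  (forall x y, exists n, walk n x y) /\
  (forall x y, exists n, n <= 3 /\ dist x y n) /\
  (exists x y, dist x y 3) /\
  (forall x, exists y, y <> x /\ ~ collinear x y) /\
  (forall x l, L l -> exists p, l p /\
     forall q, l q -> q <> p ->
       exists n m, dist x p n /\ dist x q m /\ n < m).

Definition on_walk (n : nat) (x y z : P) : Prop :=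
  exists a b, a + b = n /\ walk a x z /\ walk b z y.

Definition convex (X : P -> Prop) : Prop :=
  forall x y k z, X x -> X y -> dist x y k -> on_walk k x y z -> X z.

Definition quad (Q : P -> Prop) : Prop :=
  convex Q /\
  (forall x y, Q x -> Q y -> exists n, n <= 2 /\ dist x y n) /\
  (exists x y, Q x /\ Q y /\ dist x y 2) /\
  (forall x, Q x -> exists y, Q y /\ y <> x /\ ~ collinear x y).

Definition dense : Prop :=
  forall x y, dist x y 2 -> exists Q, quad Q /\ Q x /\ Q y.

Definition big_quad (Q : P -> Prop) : Prop :=
  quad Q /\ forall x, exists q, Q q /\ (dist x q 0 \/ dist x q 1).

Definition subspace (X : P -> Prop) : Prop :=
  forall l, L l -> (exists u v, u <> v /\ l u /\ l v /\ X u /\ X v) ->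
    forall p, l p -> X p.

Definition generated (A : P -> Prop) (p : P) : Prop :=
  forall X, subspace X -> (forall q, A q -> X q) -> X p.

(* the line uv equals the line u'v' (u,v distinct and collinear, same for
   u',v'; in a partial linear space the line through them is unique) *)
Definition same_line (u v u' v' : P) : Prop :=
  u <> v /\ u' <> v' /\ exists l, L l /\ l u /\ l v /\ l u' /\ l v'.

(* w = u * v : the third point of the line uv *)
Definition third (u v w : P) : Prop :=
  u <> v /\ w <> u /\ w <> v /\ exists l, L l /\ l u /\ l v /\ l w.

End Geometry.

(* A point p outside Y has a
   unique neighbour p' in each Q_i, and d(p, r) = d(p', r) + 1 for every r in
   Q_i.  Hence the Q_i-projections of two points of the line l are collinear,
   x^1 ~ z_{x^2} and x^2 ~ z_{x^1}.
   Suppose y^1 = a := z_{x^2} and put b := z_{x^1}.  The third point f of the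
   line x^2 a lies in Y at distance 2 from x and y, so it is collinear with the
   third point w of l.  Chasing the projections of the third point h of the
   line w f gives h^1 = x^1 and h^2 = x^2 * b; then d(w, x^2 * b) = 2 forces
   w^2 = b, and therefore y^2 = x^2 * b.  If instead y^1 = x^1 * a, then
   w^1 = a and the same argument with y and w exchanged gives y^2 = b.  The
   equivalence follows by exchanging Q1 and Q2. *)

From Stdlib Require Import Arith Lia ClassicalEpsilon Classical.

Set Implicit Arguments.
Unset Strict Implicit.

Section NearHexagon.

Context {P : Type} {L : (P -> Prop) -> Prop}.

Lemma collinear_sym u v : collinear L u v -> collinear L v u.
Proof. intros [uv [K [HK [Ku Kv]]]]. split; [congruence | exists K; auto]. Qed.

Lemma collinear_neq u v : collinear L u v -> u <> v.
Proof. now intros []. Qed.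

Lemma collinear_of_line K u v : L K -> K u -> K v -> u <> v -> collinear L u v.
Proof. intros. split; [assumption | exists K; auto]. Qed.

Lemma walk0_eq x y : walk L 0 x y -> x = y.
Proof. now inversion 1. Qed.

Lemma walk_snoc n x y z : walk L n x y -> collinear L y z -> walk L (S n) x z.
Proof.
  induction 1; intros.
  - econstructor; [eassumption | constructor].
  - econstructor; eauto.
Qed.

Lemma walk_sym n x y : walk L n x y -> walk L n y x.
Proof.
  induction 1.
  - constructor.
  - eapply walk_snoc; eauto using collinear_sym.
Qed.

Lemma dist1_collinear u v : dist L u v 1 -> collinear L u v.
Proof.
  intros [W _]. inversion W as [| ? ? z ? Cuz Wzv]; subst.
  now rewrite <- (walk0_eq Wzv).
Qed.

Lemma dist_unique x y n m : dist L x y n -> dist L x y m -> n = m.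
Proof.
  intros [Wn Hn] [Wm Hm].
  destruct (lt_eq_lt_dec n m) as [[nm | nm] | mn]; [| exact nm |].
  - exfalso; exact (Hm n nm Wn).
  - exfalso; exact (Hn m mn Wm).
Qed.

Lemma generated_subspace A : subspace L (generated L A).
Proof.
  intros K HK (u & v & uv & Ku & Kv & Gu & Gv) p Kp X HX AX.
  apply (HX K HK); [| exact Kp].
  exists u, v; repeat split; auto.
  - exact (Gu X HX AX).
  - exact (Gv X HX AX).
Qed.

Lemma generated_incl (A : P -> Prop) p : A p -> generated L A p.
Proof. intros Ap X _ AX. exact (AX p Ap). Qed.

Lemma big_quad_proj Q p : big_quad L Q -> ~ Q p -> exists q, Q q /\ collinear L p q.
Proof.
  intros [_ Hbig] nQp. destruct (Hbig p) as (q & Qq & [[W _] | D]).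
  - exfalso. apply nQp. now rewrite (walk0_eq W).
  - exists q. split; [exact Qq | exact (dist1_collinear D)].
Qed.

(* Without connectivity this would be an arbitrary number; [near_hexagon]
   makes it the collinearity distance. *)
Definition distance (x y : P) : nat :=
  epsilon (inhabits 0) (fun n => dist L x y n).

Hypothesis NH : near_hexagon L.

Lemma dist_distance x y : dist L x y (distance x y).
Proof.
  unfold distance; apply epsilon_spec.
  destruct NH as (_ & Hdiam & _). destruct (Hdiam x y) as (n & _ & Hn). eauto.
Qed.

Lemma distance_of_dist x y n : dist L x y n -> distance x y = n.
Proof. exact (dist_unique (dist_distance x y)). Qed.

Lemma distance_le_walk n x y : walk L n x y -> distance x y <= n.
Proof.
  intros W. destruct (dist_distance x y) as [_ Hmin].
  destruct (le_lt_dec (distance x y) n) as [le | lt]; [exact le |].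
  exfalso; exact (Hmin n lt W).
Qed.

Lemma distance_eq0 x y : distance x y = 0 -> x = y.
Proof.
  intros E. destruct (dist_distance x y) as [W _]. rewrite E in W.
  exact (walk0_eq W).
Qed.

Lemma distance_refl x : distance x x = 0.
Proof. pose proof (distance_le_walk (walk0 L x)). lia. Qed.

Lemma distance_pos x y : x <> y -> 0 < distance x y.
Proof.
  intros xy. destruct (distance x y) eqn:E; [| lia].
  exfalso; exact (xy (distance_eq0 E)).
Qed.

Lemma distance_sym x y : distance x y = distance y x.
Proof.
  destruct (dist_distance x y) as [Wxy _], (dist_distance y x) as [Wyx _].
  pose proof (distance_le_walk (walk_sym Wxy)).
  pose proof (distance_le_walk (walk_sym Wyx)). lia.
Qed.

Lemma distance_step x y z : collinear L y z -> distance x z <= distance x y + 1.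
Proof.
  intros C. destruct (dist_distance x y) as [W _].
  pose proof (distance_le_walk (walk_snoc W C)). lia.
Qed.

Lemma distance_eq1 x y : distance x y = 1 <-> collinear L x y.
Proof.
  split.
  - intros E. apply dist1_collinear. rewrite <- E. apply dist_distance.
  - intros C. pose proof (distance_step x C) as H. rewrite distance_refl in H.
    pose proof (distance_pos (collinear_neq C)). lia.
Qed.

Lemma collinear_of_distance_le1 x y : distance x y <= 1 -> x <> y -> collinear L x y.
Proof. intros H xy. apply distance_eq1. pose proof (distance_pos xy). lia. Qed.

Definition line3 (K : P -> Prop) (u v t : P) : Prop :=
  L K /\ K u /\ K v /\ K t /\ u <> v /\ u <> t /\ v <> t /\
  forall p, K p -> p = u \/ p = v \/ p = t.

Lemma line3_swap12 K u v t : line3 K u v t -> line3 K v u t.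
Proof.
  intros (HK & Ku & Kv & Kt & uv & ut & vt & H).
  repeat split; auto; try congruence.
  intros p Kp. destruct (H p Kp) as [| []]; auto.
Qed.

Lemma line3_swap23 K u v t : line3 K u v t -> line3 K u t v.
Proof.
  intros (HK & Ku & Kv & Kt & uv & ut & vt & H).
  repeat split; auto; try congruence.
  intros p Kp. destruct (H p Kp) as [| []]; auto.
Qed.

Lemma line3_third K u v t p : line3 K u v t -> K p -> p <> u -> p <> v -> p = t.
Proof.
  intros (_ & _ & _ & _ & _ & _ & _ & H) Kp pu pv.
  destruct (H p Kp) as [| []]; congruence.
Qed.

Lemma line3_third_point K u v t : line3 K u v t -> third L u v t.
Proof.
  intros (HK & Ku & Kv & Kt & uv & ut & vt & _).
  repeat split; try congruence. exists K; auto.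
Qed.

Lemma line3_collinear13 K u v t : line3 K u v t -> collinear L u t.
Proof. intros (HK & Ku & _ & Kt & _ & ut & _). exact (collinear_of_line HK Ku Kt ut). Qed.

Lemma line3_collinear23 K u v t : line3 K u v t -> collinear L v t.
Proof. intros (HK & _ & Kv & Kt & _ & _ & vt & _). exact (collinear_of_line HK Kv Kt vt). Qed.

Lemma nearest_point K q : L K ->
  exists p, K p /\ forall r, K r -> r <> p -> distance q r = distance q p + 1.
Proof.
  intros HK. destruct NH as (_ & _ & _ & _ & Hnear).
  destruct (Hnear q K HK) as (p & Kp & H). exists p; split; [exact Kp |].
  intros r Kr rp. destruct (H r Kr rp) as (n & m & Dn & Dm & nm).
  apply distance_of_dist in Dn, Dm.
  pose proof (distance_step q (collinear_of_line HK Kp Kr (not_eq_sym rp))). lia.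
Qed.

Lemma line3_distances K u v t q : line3 K u v t ->
  (distance q v = distance q u + 1 /\ distance q t = distance q u + 1) \/
  (distance q u = distance q v + 1 /\ distance q t = distance q v + 1) \/
  (distance q u = distance q t + 1 /\ distance q v = distance q t + 1).
Proof.
  intros (HK & Ku & Kv & Kt & uv & ut & vt & H).
  destruct (nearest_point q HK) as (p & Kp & Hp).
  destruct (H p Kp) as [-> | [-> | ->]]; [left | right; left | right; right];
    split; apply Hp; auto.
Qed.

Lemma on_line_of_collinear2 K u v p : L K -> K u -> K v -> u <> v ->
  collinear L p u -> collinear L p v -> K p.
Proof.
  intros HK Ku Kv uv Cu Cv.
  apply distance_eq1 in Cu, Cv.
  destruct (nearest_point p HK) as (p0 & Kp0 & Hp0).
  destruct (classic (u = p0)) as [<- | up0].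
  { specialize (Hp0 v Kv (not_eq_sym uv)). lia. }
  destruct (classic (v = p0)) as [<- | vp0].
  { specialize (Hp0 u Ku uv). lia. }
  specialize (Hp0 u Ku up0).
  assert (E : distance p p0 = 0) by lia.
  now rewrite (distance_eq0 E).
Qed.

Lemma line3_third_of_collinear K u v t p : line3 K u v t ->
  collinear L p u -> collinear L p v -> p = t.
Proof.
  intros HK Cu Cv. pose proof HK as (HLK & Ku & Kv & _ & uv & _).
  apply (line3_third HK); [| exact (collinear_neq Cu) | exact (collinear_neq Cv)].
  exact (on_line_of_collinear2 HLK Ku Kv uv Cu Cv).
Qed.

Lemma distance2_on_line K u v t p : line3 K u v t -> collinear L p u ->
  p <> v -> p <> t -> distance p v = 2 /\ distance p t = 2.
Proof.
  intros HK C pv pt. apply distance_eq1 in C.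
  pose proof (distance_pos pv). pose proof (distance_pos pt).
  destruct (line3_distances p HK) as [[] | [[] | []]]; lia.
Qed.

Lemma collinear_of_distance2_on_line K u v t p : line3 K u v t ->
  distance p u = 2 -> distance p v = 2 -> collinear L p t.
Proof.
  intros HK du dv. apply distance_eq1.
  destruct (line3_distances p HK) as [[] | [[] | []]]; lia.
Qed.

Definition quadlike (Q : P -> Prop) : Prop :=
  (forall u v, Q u -> Q v -> distance u v <= 2) /\
  (forall u v p, Q u -> Q v -> distance u v = 2 ->
     collinear L u p -> collinear L p v -> Q p).

Lemma quad_quadlike Q : quad L Q -> quadlike Q.
Proof.
  intros (Hconv & Hdiam & _ & _). split.
  - intros u v Qu Qv. destruct (Hdiam u v Qu Qv) as (n & le & Dn).
    rewrite (distance_of_dist Dn). exact le.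
  - intros u v p Qu Qv E Cup Cpv.
    pose proof (dist_distance u v) as D. rewrite E in D.
    apply (Hconv u v 2 p Qu Qv D).
    exists 1, 1. repeat split.
    + exact (walk_snoc (walk0 L u) Cup).
    + exact (walk_snoc (walk0 L p) Cpv).
Qed.

Hypothesis SL : slim_pls L.

Lemma line3_complete K u v : L K -> K u -> K v -> u <> v -> exists t, line3 K u v t.
Proof.
  intros HK Ku Kv uv. destruct SL as [Hslim _].
  destruct (Hslim K HK) as (a & b & c & ab & ac & bc & Habc).
  destruct (proj1 (Habc u) Ku) as [-> | [-> | ->]];
  destruct (proj1 (Habc v) Kv) as [-> | [-> | ->]]; try congruence;
  [exists c | exists b | exists c | exists a | exists b | exists a];
  (repeat split; try (apply Habc; tauto); try congruence;
   intros p Kp; apply Habc in Kp; tauto).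
Qed.

Lemma line3_of_collinear u v : collinear L u v -> exists K t, line3 K u v t.
Proof.
  intros [uv (K & HK & Ku & Kv)].
  destruct (line3_complete HK Ku Kv uv) as [t Ht]. eauto.
Qed.

Section Subspace.

Context {Y : P -> Prop}.
Hypothesis HY : subspace L Y.

Lemma outside_neq p q : ~ Y p -> Y q -> p <> q.
Proof. congruence. Qed.

Lemma subspace_line K u v p : L K -> K u -> K v -> u <> v -> Y u -> Y v -> K p -> Y p.
Proof.
  intros HK Ku Kv uv Yu Yv Kp. apply (HY HK); [| exact Kp].
  exists u, v; repeat split; assumption.
Qed.

Lemma line3_inside K u v t : line3 K u v t -> Y u -> Y v -> Y t.
Proof.
  intros (HK & Ku & Kv & Kt & uv & _) Yu Yv.
  exact (subspace_line HK Ku Kv uv Yu Yv Kt).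
Qed.

Lemma line3_outside K u v t : line3 K u v t -> ~ Y u -> Y v -> ~ Y t.
Proof.
  intros (HK & Ku & Kv & Kt & uv & _ & vt & _) nYu Yv Yt.
  exact (nYu (subspace_line HK Kv Kt vt Yv Yt Ku)).
Qed.

Lemma subspace_no_triangle p u v : ~ Y p -> Y u -> Y v -> collinear L u v ->
  collinear L p u -> collinear L p v -> False.
Proof.
  intros nYp Yu Yv [uv (K & HK & Ku & Kv)] Cu Cv.
  exact (nYp (subspace_line HK Ku Kv uv Yu Yv (on_line_of_collinear2 HK Ku Kv uv Cu Cv))).
Qed.

Section Quad.

Context {Q : P -> Prop}.
Hypotheses (HQ : quadlike Q) (QY : forall q, Q q -> Y q).

Lemma proj_unique p q q' : ~ Y p -> Q q -> Q q' ->
  collinear L p q -> collinear L p q' -> q = q'.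
Proof.
  intros nYp Qq Qq' Cq Cq'. destruct HQ as [Hdiam Hclosed].
  apply NNPP; intros qq'.
  pose proof (Hdiam q q' Qq Qq'). pose proof (distance_pos qq').
  destruct (classic (distance q q' = 1)) as [E | E].
  - apply distance_eq1 in E. exact (subspace_no_triangle nYp (QY Qq) (QY Qq') E Cq Cq').
  - apply nYp, QY. apply (Hclosed q q' p Qq Qq'); [lia | exact (collinear_sym Cq) | exact Cq'].
Qed.

(* On the line p p', the point nearest to [r] is [p']: the other two points lie
   outside [Y], and such a point collinear with [r] would have two neighbours
   [p'] and [r] in [Q]. *)
Lemma distance_proj p p' r : ~ Y p -> Q p' -> collinear L p p' -> Q r ->
  distance p r = distance p' r + 1.
Proof.
  intros nYp Qp' C Qr.
  destruct (line3_of_collinear C) as (K & t & HK).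
  assert (nYt : ~ Y t) by exact (line3_outside HK nYp (QY Qp')).
  assert (Hnear : forall s, ~ Y s -> collinear L s p' -> distance r s = 1 -> r = p').
  { intros s nYs Cs E. apply distance_eq1, collinear_sym in E.
    exact (eq_sym (proj_unique nYs Qp' Qr Cs E)). }
  pose proof (proj1 HQ r p' Qr Qp').
  pose proof (distance_pos (not_eq_sym (outside_neq nYp (QY Qr)))).
  pose proof (distance_pos (not_eq_sym (outside_neq nYt (QY Qr)))).
  rewrite (distance_sym p r), (distance_sym p' r).
  destruct (line3_distances r HK) as [[E1 E2] | [[E1 E2] | [E1 E2]]]; [| lia |].
  - assert (rp' : r = p') by (apply (Hnear p nYp C); lia).
    rewrite rp', distance_refl in E1. lia.
  - assert (rp' : r = p').
    { apply (Hnear t nYt (collinear_sym (line3_collinear23 HK))). lia. }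
    rewrite rp', distance_refl in E2. lia.
Qed.

Lemma proj_collinear_le2 p p' r : ~ Y p -> Q p' -> collinear L p p' -> Q r ->
  p' <> r -> distance p r <= 2 -> collinear L p' r.
Proof.
  intros nYp Qp' C Qr p'r le. pose proof (distance_proj nYp Qp' C Qr).
  apply collinear_of_distance_le1; [lia | exact p'r].
Qed.

Lemma proj_collinear p p' r : ~ Y p -> Q p' -> collinear L p p' -> Q r ->
  distance p r = 2 -> collinear L p' r.
Proof.
  intros nYp Qp' C Qr E. pose proof (distance_proj nYp Qp' C Qr).
  apply distance_eq1. lia.
Qed.

Lemma proj_collinear_neighbour x x' q r : ~ Y x -> Y x' -> collinear L x x' ->
  Q q -> collinear L x q -> Q r -> collinear L x' r -> collinear L q r.
Proof.
  intros nYx Yx' Cxx' Qq Cxq Qr Cx'r.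
  apply (proj_collinear_le2 nYx Qq Cxq Qr).
  - intros <-. exact (subspace_no_triangle nYx Yx' (QY Qq) Cx'r Cxx' Cxq).
  - pose proof (distance_step x Cx'r). apply distance_eq1 in Cxx'. lia.
Qed.

End Quad.

Section DisjointLine.

Context {l : P -> Prop}.
Hypotheses (Hl : L l) (HlY : forall p, l p -> ~ Y p).

Lemma distance_line_neighbour p q r : l p -> l q -> p <> q -> Y r ->
  collinear L q r -> distance p r = 2.
Proof.
  intros lp lq pq Yr C.
  pose proof (distance_step p C) as le.
  rewrite (proj2 (distance_eq1 _ _) (collinear_of_line Hl lp lq pq)) in le.
  pose proof (distance_pos (outside_neq (HlY lp) Yr)).
  enough (distance p r <> 1) by lia.
  intros E%distance_eq1.
  exact (HlY (on_line_of_collinear2 Hl lp lq pq (collinear_sym E) (collinear_sym C)) Yr).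
Qed.

Lemma proj_line_collinear Q p q p' q' : quadlike Q -> (forall s, Q s -> Y s) ->
  l p -> l q -> p <> q -> Q p' -> collinear L p p' -> Q q' -> collinear L q q' ->
  collinear L p' q'.
Proof.
  intros HQ QY lp lq pq Qp' Cp Qq' Cq.
  apply (proj_collinear HQ QY (HlY lp) Qp' Cp Qq').
  exact (distance_line_neighbour lp lq pq (QY _ Qq') Cq).
Qed.

Section TwoQuads.

Context {Q1 Q2 : P -> Prop}.
Hypotheses (HQ1 : quadlike Q1) (HQ2 : quadlike Q2)
  (Q1Y : forall q, Q1 q -> Y q) (Q2Y : forall q, Q2 q -> Y q)
  (Q12 : forall p, Q1 p -> ~ Q2 p)
  (proj1_exists : forall p, ~ Y p -> exists q, Q1 q /\ collinear L p q)
  (proj2_exists : forall p, ~ Y p -> exists q, Q2 q /\ collinear L p q).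

Section Twist.

(* The case y^1 = z_{x^2}: here [a] is z_{x^2} and [b] is z_{x^1}. *)
Variables x y w x1 x2 a b : P.
Hypotheses (Hl3 : line3 l x y w)
  (Qx1 : Q1 x1) (Cxx1 : collinear L x x1) (Qx2 : Q2 x2) (Cxx2 : collinear L x x2)
  (Qa : Q1 a) (Cya : collinear L y a) (Cx2a : collinear L x2 a)
  (Qb : Q2 b) (Cx1b : collinear L x1 b).

Let lx : l x. Proof. apply Hl3. Qed.
Let ly : l y. Proof. apply Hl3. Qed.
Let lw : l w. Proof. apply Hl3. Qed.
Let wx : w <> x. Proof. apply not_eq_sym, Hl3. Qed.
Let wy : w <> y. Proof. apply not_eq_sym, Hl3. Qed.

Let Cx1a : collinear L x1 a.
Proof. exact (proj_collinear_neighbour HQ1 Q1Y (HlY lx) (Q2Y Qx2) Cxx2 Qx1 Cxx1 Qa Cx2a). Qed.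

Let Cx2b : collinear L x2 b.
Proof. exact (proj_collinear_neighbour HQ2 Q2Y (HlY lx) (Q1Y Qx1) Cxx1 Qx2 Cxx2 Qb Cx1b). Qed.

Section ThirdPoints.

Variables (A B : P -> Prop) (f h : P).
Hypothesis HA : line3 A x2 a f.

Let Yf : Y f := line3_inside HA (Q2Y Qx2) (Q1Y Qa).

Lemma collinear_f_w : collinear L f w.
Proof.
  assert (Dxf : distance x f = 2).
  { apply (distance2_on_line HA Cxx2); apply (outside_neq (HlY lx)); auto. }
  assert (Dyf : distance y f = 2).
  { apply (distance2_on_line (line3_swap12 HA) Cya); apply (outside_neq (HlY ly)); auto. }
  rewrite distance_sym in Dxf, Dyf.
  exact (collinear_of_distance2_on_line Hl3 Dxf Dyf).
Qed.

Hypothesis HB : line3 B w f h.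

Let nYh : ~ Y h. Proof. exact (line3_outside HB (HlY lw) Yf). Qed.

Let distance_h p : collinear L p f -> Y p -> distance p h = 2.
Proof.
  intros Cpf Yp. apply (distance2_on_line (line3_swap12 HB) Cpf).
  - exact (not_eq_sym (outside_neq (HlY lw) Yp)).
  - exact (not_eq_sym (outside_neq nYh Yp)).
Qed.

Lemma proj1_h h1 : Q1 h1 -> collinear L h h1 -> h1 = x1.
Proof.
  intros Qh1 Chh1.
  destruct (line3_of_collinear Cx1a) as (M & m & HM).
  destruct (proj1_exists (HlY lw)) as (w1 & Qw1 & Cww1).
  assert (Cw1x1 := proj_line_collinear HQ1 Q1Y lw lx wx Qw1 Cww1 Qx1 Cxx1).
  assert (Cw1a := proj_line_collinear HQ1 Q1Y lw ly wy Qw1 Cww1 Qa Cya).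
  assert (w1m := line3_third_of_collinear HM Cw1x1 Cw1a).
  subst m.
  assert (w1f : w1 <> f).
  { intros ->. apply (Q12 Qx1). enough (x1 = x2) as -> by exact Qx2.
    apply (line3_third_of_collinear (line3_swap23 (line3_swap12 HA)) Cx1a).
    exact (collinear_sym Cw1x1). }
  assert (Ch1a : collinear L h1 a).
  { apply (proj_collinear HQ1 Q1Y nYh Qh1 Chh1 Qa).
    rewrite distance_sym.
    exact (distance_h (line3_collinear23 HA) (Q1Y Qa)). }
  assert (Ch1w1 : collinear L h1 w1).
  { apply (proj_collinear HQ1 Q1Y nYh Qh1 Chh1 Qw1).
    rewrite distance_sym.
    apply (distance2_on_line HB (collinear_sym Cww1) w1f).
    exact (not_eq_sym (outside_neq nYh (Q1Y Qw1))). }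
  exact (line3_third_of_collinear (line3_swap23 (line3_swap12 HM)) Ch1a Ch1w1).
Qed.

Lemma proj2_h N c h2 : line3 N x2 b c -> Q2 h2 -> collinear L h h2 -> h2 = c.
Proof.
  intros HN Qh2 Chh2.
  destruct (proj1_exists nYh) as (h1 & Qh1 & Chh1).
  rewrite (proj1_h Qh1 Chh1) in Chh1.
  apply (line3_third_of_collinear HN).
  - apply (proj_collinear HQ2 Q2Y nYh Qh2 Chh2 Qx2).
    rewrite distance_sym.
    exact (distance_h (line3_collinear13 HA) (Q2Y Qx2)).
  - exact (proj_collinear_neighbour HQ2 Q2Y nYh (Q1Y Qx1) Chh1 Qh2 Chh2 Qb Cx1b).
Qed.

End ThirdPoints.

Lemma proj2_w w2 : Q2 w2 -> collinear L w w2 -> w2 = b.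
Proof.
  intros Qw2 Cww2.
  destruct (line3_of_collinear Cx2a) as (A & f & HA).
  destruct (line3_of_collinear (collinear_sym (collinear_f_w HA))) as (B & h & HB).
  destruct (line3_of_collinear Cx2b) as (N & c & HN).
  assert (nYh := line3_outside HB (HlY lw) (line3_inside HA (Q2Y Qx2) (Q1Y Qa))).
  destruct (proj2_exists nYh) as (h2 & Qh2 & Chh2).
  assert (h2c := proj2_h HA HB HN Qh2 Chh2). subst h2.
  assert (cf : c <> f).
  { intros ->. apply (Q12 Qa). enough (a = b) as -> by exact Qb.
    exact (line3_third_of_collinear (line3_swap23 HN) (collinear_sym Cx2a)
             (line3_collinear23 HA)). }
  assert (Cw2c : collinear L w2 c).
  { apply (proj_collinear HQ2 Q2Y (HlY lw) Qw2 Cww2 Qh2).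
    rewrite distance_sym.
    apply (distance2_on_line (line3_swap12 (line3_swap23 HB)) (collinear_sym Chh2)).
    - exact (not_eq_sym (outside_neq (HlY lw) (Q2Y Qh2))).
    - exact cf. }
  assert (Cw2x2 := proj_line_collinear HQ2 Q2Y lw lx wx Qw2 Cww2 Qx2 Cxx2).
  exact (line3_third_of_collinear (line3_swap23 HN) Cw2x2 Cw2c).
Qed.

End Twist.

Lemma proj_lines_twisted x y x1 x2 y1 y2 a b : l x -> l y -> x <> y ->
  Q1 x1 -> collinear L x x1 -> Q2 x2 -> collinear L x x2 ->
  Q1 y1 -> collinear L y y1 -> Q2 y2 -> collinear L y y2 ->
  Q1 a -> collinear L x2 a -> Q2 b -> collinear L x1 b ->
  same_line L x1 y1 x1 a ->
  (y1 = a /\ third L x2 b y2) \/ (third L x1 a y1 /\ y2 = b).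
Proof.
  intros lx ly xy Qx1 Cxx1 Qx2 Cxx2 Qy1 Cyy1 Qy2 Cyy2 Qa Cx2a Qb Cx1b
    (x1y1 & x1a & K & HLK & Kx1 & Ky1 & _ & Ka).
  destruct (line3_complete Hl lx ly xy) as (w & Hl3).
  pose proof Hl3 as (_ & _ & _ & lw & _ & xw & yw & _).
  destruct (proj1_exists (HlY lw)) as (w1 & Qw1 & Cww1).
  destruct (proj2_exists (HlY lw)) as (w2 & Qw2 & Cww2).
  assert (Cy2x2 := proj_line_collinear HQ2 Q2Y ly lx (not_eq_sym xy) Qy2 Cyy2 Qx2 Cxx2).
  destruct (classic (y1 = a)) as [<- | y1a]; [left | right].
  - split; [reflexivity |].
    assert (w2b := proj2_w Hl3 Qx1 Cxx1 Qx2 Cxx2 Qy1 Cyy1 Cx2a Qb Cx1b Qw2 Cww2).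
    subst w2.
    assert (Cy2b := proj_line_collinear HQ2 Q2Y ly lw yw Qy2 Cyy2 Qb Cww2).
    destruct (line3_of_collinear
      (proj_collinear_neighbour HQ2 Q2Y (HlY lx) (Q1Y Qx1) Cxx1 Qx2 Cxx2 Qb Cx1b))
      as (N & c & HN).
    rewrite (line3_third_of_collinear HN Cy2x2 Cy2b).
    exact (line3_third_point HN).
  - destruct (line3_complete HLK Kx1 Ky1 x1y1) as (t & HK).
    assert (at' := line3_third HK Ka (not_eq_sym x1a) (not_eq_sym y1a)). subst t.
    split; [exact (line3_third_point (line3_swap23 HK)) |].
    assert (Cw1x1 := proj_line_collinear HQ1 Q1Y lw lx (not_eq_sym xw) Qw1 Cww1 Qx1 Cxx1).
    assert (Cw1y1 := proj_line_collinear HQ1 Q1Y lw ly (not_eq_sym yw) Qw1 Cww1 Qy1 Cyy1).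
    rewrite (line3_third_of_collinear HK Cw1x1 Cw1y1) in Cww1.
    exact (proj2_w (line3_swap23 Hl3) Qx1 Cxx1 Qx2 Cxx2 Qa Cww1 Cx2a Qb Cx1b Qy2 Cyy2).
Qed.

Lemma same_line_proj x y x1 x2 y1 y2 a b : l x -> l y -> x <> y ->
  Q1 x1 -> collinear L x x1 -> Q2 x2 -> collinear L x x2 ->
  Q1 y1 -> collinear L y y1 -> Q2 y2 -> collinear L y y2 ->
  Q1 a -> collinear L x2 a -> Q2 b -> collinear L x1 b ->
  same_line L x1 y1 x1 a -> same_line L x2 y2 x2 b.
Proof.
  intros lx ly xy Qx1 Cxx1 Qx2 Cxx2 Qy1 Cyy1 Qy2 Cyy2 Qa Cx2a Qb Cx1b Hsame.
  destruct (proj_lines_twisted lx ly xy Qx1 Cxx1 Qx2 Cxx2 Qy1 Cyy1 Qy2 Cyy2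
              Qa Cx2a Qb Cx1b Hsame)
    as [[_ (x2b & y2x2 & y2b & N & HN & Nx2 & Nb & Ny2)] | [_ ->]].
  - repeat split; auto. exists N; auto.
  - destruct (proj_collinear_neighbour HQ2 Q2Y (HlY lx) (Q1Y Qx1) Cxx1 Qx2 Cxx2 Qb Cx1b)
      as [x2b (N & HN & Nx2 & Nb)].
    repeat split; auto. exists N; auto.
Qed.

End TwoQuads.

End DisjointLine.
End Subspace.
End NearHexagon.

Theorem proposition2p4 (P : Type) (L : (P -> Prop) -> Prop)
  (Q1 Q2 : P -> Prop) (l : P -> Prop)
  (x y x1 x2 y1 y2 a b : P) :
  slim_pls L -> near_hexagon L -> dense L ->
  big_quad L Q1 -> big_quad L Q2 -> (forall p, Q1 p -> ~ Q2 p) ->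
  L l -> (forall p, l p -> ~ generated L (fun q => Q1 q \/ Q2 q) p) ->
  l x -> l y -> x <> y ->
  (* x1 = x^1, x2 = x^2, y1 = y^1, y2 = y^2 *)
  Q1 x1 -> dist L x x1 1 -> Q2 x2 -> dist L x x2 1 ->
  Q1 y1 -> dist L y y1 1 -> Q2 y2 -> dist L y y2 1 ->
  (* a = z_{x^2} (in Q1), b = z_{x^1} (in Q2) *)
  Q1 a -> dist L x2 a 1 -> Q2 b -> dist L x1 b 1 ->
  (same_line L x1 y1 x1 a <-> same_line L x2 y2 x2 b) /\
  (same_line L x1 y1 x1 a ->
     (y1 = a /\ third L x2 b y2) \/ (third L x1 a y1 /\ y2 = b)).
Proof.
  intros SL NH _ BQ1 BQ2 Q12 Hl HlY lx ly xy Qx1 Cxx1 Qx2 Cxx2 Qy1 Cyy1 Qy2 Cyy2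
    Qa Cx2a Qb Cx1b.
  apply dist1_collinear in Cxx1, Cxx2, Cyy1, Cyy2, Cx2a, Cx1b.
  set (Y := generated L (fun q => Q1 q \/ Q2 q)) in *.
  assert (HY : subspace L Y) by apply generated_subspace.
  assert (Q1Y : forall q, Q1 q -> Y q) by (intros q Qq; apply generated_incl; auto).
  assert (Q2Y : forall q, Q2 q -> Y q) by (intros q Qq; apply generated_incl; auto).
  assert (Q21 : forall p, Q2 p -> ~ Q1 p) by (intros p Q2p Q1p; exact (Q12 p Q1p Q2p)).
  assert (HQ1 := quad_quadlike NH (proj1 BQ1)).
  assert (HQ2 := quad_quadlike NH (proj1 BQ2)).
  assert (proj1_exists : forall p, ~ Y p -> exists q, Q1 q /\ collinear L p q)
    by (intros p nYp; apply (big_quad_proj BQ1); intro; apply nYp; auto).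
  assert (proj2_exists : forall p, ~ Y p -> exists q, Q2 q /\ collinear L p q)
    by (intros p nYp; apply (big_quad_proj BQ2); intro; apply nYp; auto).
  split; [split |].
  - exact (same_line_proj NH SL HY Hl HlY HQ1 HQ2 Q1Y Q2Y Q12 proj1_exists proj2_exists
      lx ly xy Qx1 Cxx1 Qx2 Cxx2 Qy1 Cyy1 Qy2 Cyy2 Qa Cx2a Qb Cx1b).
  - exact (same_line_proj NH SL HY Hl HlY HQ2 HQ1 Q2Y Q1Y Q21 proj2_exists proj1_exists
      lx ly xy Qx2 Cxx2 Qx1 Cxx1 Qy2 Cyy2 Qy1 Cyy1 Qb Cx1b Qa Cx2a).
  - exact (proj_lines_twisted NH SL HY Hl HlY HQ1 HQ2 Q1Y Q2Y Q12 proj1_exists proj2_exists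
      lx ly xy Qx1 Cxx1 Qx2 Cxx2 Qy1 Cyy1 Qy2 Cyy2 Qa Cx2a Qb Cx1b).
Qed.
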